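(* For all $m,n\ge 3$, the state complexity of $(V_m(a,b,c,d))^R\,V_n(d,c,b,a)$ is $3\cdot 2^{m+n-2}$.
   Context: The state complexity of a regular language is the number of states of its minimal complete DFA. For $n\ge 3$, $\mathcal{V}_n(a,b,c,d)$ is the DFA over $\{a,b,c,d\}$ with states $\{0,\dots,n-1\}$, initial state $0$, final states $\{n-1\}$, where $a$ maps $i\mapsto i+1\pmod n$; $b$ swaps $n-2$ and $n-1$ fixing other states; $c$ maps $n-1$ to $n-2$ fixing other states; $d$ is the identity. $V_n(a,b,c,d)$ is its language. $V_n(d,c,b,a)$ is the language of the DFA obtained by renaming letters: same states, initial state $0$, final states $\{n-1\}$, where $d$ maps $i\mapsto i+1\pmod n$, $c$ swaps $n-2$ and $n-1$, $b$ maps $n-1$ to $n-2$ fixing others, and $a$ is the identity. $L^R$ is the reversal of $L$, and $KL$ is concatenation. *)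

From mathcomp Require Import all_boot.
Set Implicit Arguments. Unset Strict Implicit. Unset Printing Implicit Defensive.

Inductive letter := La | Lb | Lc | Ld.

Definition word := seq letter.
Definition language := word -> Prop.

Definition lang_rev (L : language) : language := fun w => L (rev w).
Definition lang_cat (K L : language) : language :=
  fun w => exists u v, w = u ++ v /\ K u /\ L v.

Definition recognizable_with (k : nat) (L : language) : Prop :=
  exists (delta : 'I_k -> letter -> 'I_k) (s : 'I_k) (F : pred 'I_k),
    forall w : word, L w <-> F (foldl delta s w).

Definition state_complexity (L : language) (k : nat) : Prop :=
  recognizable_with k L /\ forall j, j < k -> ~ recognizable_with j L.

Definition rot (n q : nat) : nat := q.+1 %% n.
Definition swp (n q : nat) : nat :=
  if q == n - 2 then n - 1 else if q == n - 1 then n - 2 else q.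
Definition mp (n q : nat) : nat := if q == n - 1 then n - 2 else q.

Definition Vabcd_step (n : nat) (q : nat) (l : letter) : nat :=
  match l with La => rot n q | Lb => swp n q | Lc => mp n q | Ld => q end.
Definition Vdcba_step (n : nat) (q : nat) (l : letter) : nat :=
  match l with Ld => rot n q | Lc => swp n q | Lb => mp n q | La => q end.

Definition V_abcd (n : nat) : language :=
  fun w => foldl (Vabcd_step n) 0 w = n - 1.
Definition V_dcba (n : nat) : language :=
  fun w => foldl (Vdcba_step n) 0 w = n - 1.

(* We build an explicit DFA for K^R L from DFAs of K and L (Section
   ReversalConcatenation): its states are pairs (S, T), S a subset of the
   states of the K-automaton (reversed subset construction), T a subset of
   the states of the L-automaton (the runs of L started after each prefix
   in K^R).  For K = V_m(a,b,c,d), L = V_n(d,c,b,a) (Section Witnesses),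
   every reachable state is "valid" (0 in S implies 0 in T), and conversely
   every valid state is reachable, by explicit words built from the
   rotations a (on S) and d (on T) and the letters b, c.  Any two distinct
   states are distinguished by a word a^p b d^n (testing p in S) or by
   d^(n-1-t) (testing t in T).  The automaton restricted to valid states is
   therefore minimal, so a general Myhill-Nerode argument
   (state_complexity_minimal_dfa) gives the state complexity as the number of
   valid states, 2^(m-1) 2^n + 2^(m-1) 2^(n-1) = 3 * 2^(m+n-2). *)

From HB Require Import structures.
From Pilot Require Import Defs.
From mathcomp Require Import all_boot.
From mathcomp Require Import zify.
Set Implicit Arguments. Unset Strict Implicit. Unset Printing Implicit Defensive.

(* Words are countable, so that a witness word can be chosen without axioms. *)
Definition letter_code (x : letter) : nat :=
  match x with La => 0 | Lb => 1 | Lc => 2 | Ld => 3 end.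
Definition letter_decode (k : nat) : letter :=
  match k with 0 => La | 1 => Lb | 2 => Lc | _ => Ld end.
Lemma letter_codeK : cancel letter_code letter_decode. Proof. by case. Qed.
HB.instance Definition _ := Countable.copy letter (can_type letter_codeK).

Lemma recognizable_fin (Q : finType) (L : language) (delta : Q -> letter -> Q)
    (s : Q) (F : pred Q) :
  (forall w, L w <-> F (foldl delta s w)) -> recognizable_with #|Q| L.
Proof.
move=> HL.
exists (fun i x => enum_rank (delta (enum_val i) x)), (enum_rank s),
  (fun i => F (enum_val i)).
have run_rank w q : foldl (fun i x => enum_rank (delta (enum_val i) x)) (enum_rank q) w
    = enum_rank (foldl delta q w).
  by elim: w q => [|x w IH] q //=; rewrite enum_rankK IH.
by move=> w; rewrite run_rank enum_rankK.
Qed.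

(* Myhill-Nerode lower bound: words leading to pairwise distinguishable
   states must be sent to pairwise distinct states of any DFA for L. *)
Lemma not_recognizable_small (X : finType) (L : language) (wd : X -> word) :
  (forall x y, x <> y -> exists z, ~ (L (wd x ++ z) <-> L (wd y ++ z))) ->
  forall j, j < #|X| -> ~ recognizable_with j L.
Proof.
move=> dist j lt_j [delta [s [F HL]]].
pose f x := foldl delta s (wd x).
have f_inj : injective f.
  move=> x y fxy; case: (eqVneq x y) => // /eqP /dist [z []].
  by rewrite !HL !foldl_cat; move: fxy; rewrite /f => ->.
by have := leq_card f f_inj; rewrite card_ord leqNgt lt_j.
Qed.

Lemma state_complexity_minimal_dfa (Q : finType) (L : language)
    (delta : Q -> letter -> Q) (s : Q) (F : pred Q) :
  (forall w, L w <-> F (foldl delta s w)) ->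
  (forall q, exists w, foldl delta s w = q) ->
  (forall p q, p <> q -> exists z, F (foldl delta p z) <> F (foldl delta q z)) ->
  state_complexity L #|Q|.
Proof.
move=> HL reach dist; split; first exact: recognizable_fin HL.
have reachb q : exists w, foldl delta s w == q by have [w <-] := reach q; exists w.
pose wd q := xchoose (reachb q).
have wdE q : foldl delta s (wd q) = q by apply/eqP/(xchooseP (reachb q)).
apply: (@not_recognizable_small Q L wd) => p q /dist [z Hz].
exists z; rewrite !HL !foldl_cat !wdE => H.
by apply: Hz; apply/idP/idP => /H.
Qed.

Lemma lang_cat_ext (K K' L L' : language) :
  (forall w, K w <-> K' w) -> (forall w, L w <-> L' w) ->
  forall w, lang_cat K L w <-> lang_cat K' L' w.
Proof.
move=> HK HL w; split=> [[u [v [-> [Ku Lv]]]]|[u [v [-> [Ku Lv]]]]];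
  by exists u, v; split => //; split; [apply/HK|apply/HL].
Qed.

Lemma lang_rev_ext (K K' : language) :
  (forall w, K w <-> K' w) -> forall w, lang_rev K w <-> lang_rev K' w.
Proof. by move=> HK w; apply: HK. Qed.

Definition drun (Q : Type) (d : letter -> Q -> Q) (q : Q) (w : word) : Q :=
  foldl (fun q x => d x q) q w.
Definition dfa_lang (Q : finType) (d : letter -> Q -> Q) (q0 : Q) (F : {set Q})
  : language := fun w => drun d q0 w \in F.

(* A state is a pair (S, T): S is the set of states of the K-automaton from
   which the reverse of the input read so far leads into FA (the subset
   construction for K^R), T is the set of states reached in the L-automaton
   by suffixes of the input that follow a prefix in K^R.  Reading a letter
   adds b0 to T exactly when the new prefix is in K^R, i.e. a0 is in S. *)
Section ReversalConcatenation.
Variables (QA QB : finType).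
Variables (dA : letter -> QA -> QA) (a0 : QA) (FA : {set QA}).
Variables (dB : letter -> QB -> QB) (b0 : QB) (FB : {set QB}).

Definition rc_state := ({set QA} * {set QB})%type.
Definition rc_step (s : rc_state) (x : letter) : rc_state :=
  let S := [set q | dA x q \in s.1] in
  (S, if a0 \in S then b0 |: (dB x @: s.2) else dB x @: s.2).
Definition rc_run := foldl rc_step.
Definition rc_init : rc_state := (FA, set0).
Definition rc_acc (s : rc_state) := [exists b in FB, b \in s.2].

Lemma rc_step1 s x q : (q \in (rc_step s x).1) = (dA x q \in s.1).
Proof. by rewrite inE. Qed.

Lemma rc_step2 s x u : (u \in (rc_step s x).2) =
   (u \in dB x @: s.2) || ((u == b0) && (a0 \in (rc_step s x).1)).
Proof.
rewrite /rc_step /=; case: ifP => H.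
  by rewrite in_setU1 orbC; case: (u == b0); rewrite ?H.
by case: (u == b0); rewrite ?orbF //= H orbF.
Qed.

Definition rc_valid (s : rc_state) := (a0 \in s.1) ==> (b0 \in s.2).

Lemma rc_step_valid s x : a0 \in (rc_step s x).1 -> b0 \in (rc_step s x).2.
Proof. by move=> H; rewrite rc_step2 eqxx H orbT. Qed.

Lemma rc_valid_step s x : rc_valid (rc_step s x).
Proof. exact/implyP/rc_step_valid. Qed.

Lemma rc_step_set0 s x S : s.2 = set0 -> (rc_step s x).1 = S -> a0 \notin S ->
  rc_step s x = (S, set0).
Proof.
case: s => S0 T /= -> <- /negbTE a0S.
by rewrite /rc_step /= a0S imset0.
Qed.

Lemma rc_run_cons s x z : rc_run s (x :: z) = rc_run (rc_step s x) z.
Proof. by []. Qed.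

Lemma rc_run_rcons s z x : rc_run s (rcons z x) = rc_step (rc_run s z) x.
Proof. by rewrite /rc_run foldl_rcons. Qed.

Lemma rc_run_cat s z1 z2 : rc_run s (z1 ++ z2) = rc_run (rc_run s z1) z2.
Proof. by rewrite /rc_run foldl_cat. Qed.

Lemma rc_run1 s z p : (p \in (rc_run s z).1) = (drun dA p (rev z) \in s.1).
Proof.
elim/last_ind: z p => [|z x IH] p //.
by rewrite rc_run_rcons rc_step1 IH rev_rcons.
Qed.

Lemma rc_run2 s z t : t \in (rc_run s z).2 <->
  (exists2 t0, t0 \in s.2 & drun dB t0 z = t) \/
  (exists z1 z2, [/\ z = z1 ++ z2, z1 <> [::], drun dA a0 (rev z1) \in s.1
                   & drun dB b0 z2 = t]).
Proof.
elim/last_ind: z t => [|z x IH] t.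
  split; first by move=> H; left; exists t.
  case=> [[t0 H <-] //|[[|y z1] [z2 [E ne _ _]]] //].
rewrite rc_run_rcons rc_step2; split.
  case/orP=> [/imsetP [t1 /IH H1 ->]|/andP [/eqP -> H0]].
    case: H1 => [[t0 H0 <-]|[z1 [z2 [E ne H0 <-]]]].
      by left; exists t0 => //; rewrite /drun foldl_rcons.
    right; exists z1, (rcons z2 x); split => //; first by rewrite E rcons_cat.
    by rewrite /drun foldl_rcons.
  right; exists (rcons z x), [::]; split => //; first by rewrite cats0.
    by case: z {IH H0}.
  by rewrite rc_step1 rc_run1 in H0; rewrite rev_rcons.
case=> [[t0 H0 <-]|[z1 [z2 [E ne H0 <-]]]].
  apply/orP; left; apply/imsetP; exists (drun dB t0 z); last first.
    by rewrite /drun foldl_rcons.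
  by apply/IH; left; exists t0.
case/lastP: z2 E => [|z2 y] E.
  rewrite cats0 in E; rewrite -E in H0 *.
  by apply/orP; right; rewrite eqxx rc_step1 rc_run1; rewrite rev_rcons in H0.
rewrite -rcons_cat in E; case/rcons_inj: E => Ez <-.
apply/orP; left; apply/imsetP; exists (drun dB b0 z2); last first.
  by rewrite /drun foldl_rcons.
by apply/IH; right; exists z1, z2.
Qed.

Hypothesis a0_notin_FA : a0 \notin FA.

Theorem rc_correct w :
  lang_cat (lang_rev (dfa_lang dA a0 FA)) (dfa_lang dB b0 FB) w <->
  rc_acc (rc_run rc_init w).
Proof.
split.
- case=> u [v [-> [Ku Lv]]].
  apply/existsP; exists (drun dB b0 v); rewrite Lv /=; apply/rc_run2; right.
  exists u, v; split => // u0.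
  by move: Ku; rewrite u0 /lang_rev /dfa_lang /= (negbTE a0_notin_FA).
- case/existsP => t /andP [tF /rc_run2 [[t0] | [u [v [-> _ Ku Lv]]]]].
    by rewrite inE.
  by exists u, v; split => //; split => //; rewrite /dfa_lang Lv.
Qed.

End ReversalConcatenation.

Lemma rotE k q : q < k -> Defs.rot k q = if q == k.-1 then 0 else q.+1.
Proof.
move=> lt; rewrite /Defs.rot; case: ifP => /eqP H.
  by rewrite (_ : q.+1 = k) ?modnn //; lia.
by rewrite modn_small //; lia.
Qed.

Lemma Vabcd_step_lt k q x : 2 <= k -> q < k -> Vabcd_step k q x < k.
Proof.
move=> hk hq; case: x => /=; rewrite ?rotE ?/swp ?/mp //;
  repeat case: ifP => //; lia.
Qed.

Lemma Vdcba_step_lt k q x : 2 <= k -> q < k -> Vdcba_step k q x < k.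
Proof.
move=> hk hq; case: x => /=; rewrite ?rotE ?/swp ?/mp //;
  repeat case: ifP => //; lia.
Qed.

Section Witnesses.
Variables m' n' : nat.
Local Notation m := m'.+3.
Local Notation n := n'.+3.

Definition trA (x : letter) (q : 'I_m) : 'I_m := inord (Vabcd_step m q x).
Definition trB (x : letter) (t : 'I_n) : 'I_n := inord (Vdcba_step n t x).

Lemma val_trA x q : nat_of_ord (trA x q) = Vabcd_step m q x.
Proof. by rewrite inordK // Vabcd_step_lt. Qed.
Lemma val_trB x t : nat_of_ord (trB x t) = Vdcba_step n t x.
Proof. by rewrite inordK // Vdcba_step_lt. Qed.

Lemma trA_a q : nat_of_ord (trA La q) = if nat_of_ord q == m'.+2 then 0 else q.+1.
Proof. by rewrite val_trA /= rotE. Qed.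
Lemma trA_b q : nat_of_ord (trA Lb q) =
  if nat_of_ord q == m'.+1 then m'.+2 else if nat_of_ord q == m'.+2 then m'.+1 else q.
Proof. rewrite val_trA /= /swp; have := ltn_ord q; repeat case: ifP; lia. Qed.
Lemma trA_c q : nat_of_ord (trA Lc q) = if nat_of_ord q == m'.+2 then m'.+1 else q.
Proof. rewrite val_trA /= /mp; have := ltn_ord q; repeat case: ifP; lia. Qed.
Lemma trA_d q : trA Ld q = q.
Proof. by apply: val_inj => /=; rewrite val_trA. Qed.

Lemma trB_d t : nat_of_ord (trB Ld t) = if nat_of_ord t == n'.+2 then 0 else t.+1.
Proof. by rewrite val_trB /= rotE. Qed.
Lemma trB_c t : nat_of_ord (trB Lc t) =
  if nat_of_ord t == n'.+1 then n'.+2 else if nat_of_ord t == n'.+2 then n'.+1 else t.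
Proof. rewrite val_trB /= /swp; have := ltn_ord t; repeat case: ifP; lia. Qed.
Lemma trB_b t : nat_of_ord (trB Lb t) = if nat_of_ord t == n'.+2 then n'.+1 else t.
Proof. rewrite val_trB /= /mp; have := ltn_ord t; repeat case: ifP; lia. Qed.
Lemma trB_a t : trB La t = t.
Proof. by apply: val_inj => /=; rewrite val_trB. Qed.

Lemma trB_cK : involutive (trB Lc).
Proof. move=> t; apply: val_inj => /=; rewrite !trB_c; have := ltn_ord t; repeat case: ifP; lia. Qed.

Definition predB (u : 'I_n) : 'I_n := inord (if u == 0 :> nat then n'.+2 else u.-1).
Lemma val_predB u : nat_of_ord (predB u) = if u == 0 :> nat then n'.+2 else u.-1.
Proof. rewrite inordK //; have := ltn_ord u; case: ifP; lia. Qed.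

Lemma predB_K : cancel predB (trB Ld).
Proof.
move=> u; apply: val_inj => /=; rewrite trB_d val_predB.
by have := ltn_ord u; repeat case: ifP; lia.
Qed.

Lemma trB_dK : cancel (trB Ld) predB.
Proof.
move=> t; apply: val_inj => /=; rewrite val_predB trB_d.
by have := ltn_ord t; repeat case: ifP; lia.
Qed.

Lemma img_a (T : {set 'I_n}) : trB La @: T = T.
Proof. by rewrite (eq_imset _ trB_a) imset_id. Qed.

Lemma in_img_d (T : {set 'I_n}) u : (u \in trB Ld @: T) = (predB u \in T).
Proof. by rewrite -{1}(predB_K u) mem_imset //; exact: can_inj trB_dK. Qed.

Lemma in_img_c (T : {set 'I_n}) u : (u \in trB Lc @: T) = (trB Lc u \in T).
Proof. by rewrite -{1}(trB_cK u) mem_imset //; exact: inv_inj trB_cK. Qed.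

Lemma img_cc (T : {set 'I_n}) : trB Lc @: (trB Lc @: T) = T.
Proof. by apply/setP => u; rewrite !in_img_c trB_cK. Qed.

Lemma in_img_b (T : {set 'I_n}) u : (u \in trB Lb @: T) =
  (u != n'.+2 :> nat) && ((u \in T) || (u == n'.+1 :> nat) && (ord_max \in T)).
Proof.
apply/imsetP/idP => [[t tT ->]|].
  have := ltn_ord t; have := trB_b t; case: ifP => /eqP E tbE lt.
    have tm : t = ord_max by apply: val_inj.
    rewrite tbE -tm tT /=; apply/andP; split; first by apply/eqP; lia.
    by apply/orP; right; rewrite eqxx.
  have -> : trB Lb t = t by apply: val_inj.
  by rewrite tT andbT; apply/eqP.
case/andP=> /eqP u1 /orP [uT|/andP [/eqP u2 mT]].
  by exists u => //; apply: val_inj => /=; rewrite trB_b; case: ifP => // /eqP.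
by exists ord_max => //; apply: val_inj => /=; rewrite trB_b /= eqxx.
Qed.

Lemma drun_trA w p : foldl (Vabcd_step m) (nat_of_ord p) w = drun trA p w.
Proof. by elim: w p => [|x w IH] p //=; rewrite -val_trA IH. Qed.
Lemma drun_trB w p : foldl (Vdcba_step n) (nat_of_ord p) w = drun trB p w.
Proof. by elim: w p => [|x w IH] p //=; rewrite -val_trB IH. Qed.

Lemma V_abcd_dfa w : V_abcd m w <-> dfa_lang trA ord0 [set ord_max] w.
Proof.
rewrite /V_abcd /dfa_lang inE -val_eqE (drun_trA w ord0) subn1.
by split => /eqP.
Qed.

Lemma V_dcba_dfa w : V_dcba n w <-> dfa_lang trB ord0 [set ord_max] w.
Proof.
rewrite /V_dcba /dfa_lang inE -val_eqE (drun_trB w ord0) subn1.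
by split => /eqP.
Qed.

Local Notation state := (rc_state 'I_m 'I_n).
Local Notation step := (rc_step trA ord0 trB ord0).
Local Notation run := (rc_run trA ord0 trB ord0).
Local Notation init := (rc_init 'I_n [set ord_max : 'I_m]).
Local Notation valid := (rc_valid (ord0 : 'I_m) (ord0 : 'I_n)).

Definition acc (s : state) := ord_max \in s.2.

Lemma accE s : rc_acc [set ord_max] s = acc s.
Proof.
apply/existsP/idP => [[b /andP [/set1P -> //]]|sm].
by exists ord_max; rewrite inE eqxx.
Qed.

Lemma V_correct w :
  lang_cat (lang_rev (V_abcd m)) (V_dcba n) w <-> acc (run init w).
Proof.
apply: iff_trans (lang_cat_ext (lang_rev_ext V_abcd_dfa) V_dcba_dfa w) _.
rewrite -accE; apply: rc_correct.
by rewrite inE -val_eqE.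
Qed.

Lemma nseqSr (k : nat) (x : letter) : nseq k.+1 x = rcons (nseq k x) x.
Proof. by rewrite -cats1 -addn1 nseqD. Qed.

(* The letter d fixes S (it is the identity of V_m) and rotates T, adding 0
   when 0 is in S; so after d^k, T consists of the rotations by k of the old
   T together, if 0 is in S, with the states 0, ..., k-1. *)
Lemma step_d1 s : (step s Ld).1 = s.1.
Proof. by apply/setP => q; rewrite rc_step1 trA_d. Qed.

Lemma run_d s k : k <= n -> (run s (nseq k Ld)).1 = s.1 /\
  forall u, u \in (run s (nseq k Ld)).2 <->
   (exists2 t0, t0 \in s.2 & (t0 + k = u \/ t0 + k = u + n)) \/ (ord0 \in s.1 /\ u < k).
Proof.
elim: k => [|k IH] lek.
  split => // u; split => [H|]; first by left; exists u => //; left; rewrite addn0.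
  case=> [[t0 T0 [E|E]]|[_ //]].
    by have -> : u = t0 by apply: val_inj => /=; rewrite -E addn0.
  by have := ltn_ord t0; lia.
have [S1 IH2] := IH (ltnW lek).
rewrite nseqSr rc_run_rcons step_d1 S1; split => // u.
rewrite rc_step2 in_img_d step_d1 S1.
move/(_ (predB u)): IH2 => IHu.
have hu := ltn_ord u; have hr := val_predB u.
split.
  case/orP => [/IHu [[t0 T0 E]|[S0 L]] | /andP [/eqP -> S0]].
  - left; exists t0 => //; have := ltn_ord t0; move: E hr; case: ifP; lia.
  - right; split => //; move: L hr; case: ifP; lia.
  - by right; split.
case => [[t0 T0 E]|[S0 L]].
  apply/orP; left; apply/IHu; left; exists t0 => //.
  have := ltn_ord t0; move: E hr; case: ifP; lia.
case: (eqVneq (nat_of_ord u) 0) => [u0|un0].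
  have -> : u = ord0 by apply: val_inj.
  by apply/orP; right; rewrite eqxx S0.
apply/orP; left; apply/IHu; right; split => //.
move: L hr; case: ifP; lia.
Qed.

Lemma acc_d s (t : 'I_n) : acc (run s (nseq (n'.+2 - t) Ld)) = (t \in s.2).
Proof.
have := ltn_ord t => ht.
have [_ H] := @run_d s (n'.+2 - t) (leq_trans (leq_subr _ _) (leqnSn _)).
apply/idP/idP => [/H [[t0 T0 [E|E]]|[_ L]]|tT].
- by have -> : t = t0 by apply: val_inj => /=; move: E => /=; lia.
- by have := ltn_ord t0; move: E => /=; lia.
- by move: L => /=; lia.
by apply/H; left; exists t => //; left => /=; lia.
Qed.

Definition rotS k (S : {set 'I_m}) := [set q : 'I_m | inord ((q + k) %% m) \in S].

Lemma rotS_comp a b S : rotS a (rotS b S) = rotS (a + b) S.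
Proof.
apply/setP => q; rewrite !inE inordK ?ltn_pmod //.
by rewrite modnDml addnA.
Qed.

Lemma rotS_m S : rotS m S = S.
Proof. by apply/setP => q; rewrite inE modnDr modn_small // inord_val. Qed.

Lemma rotS0 S : rotS 0 S = S.
Proof. by apply/setP => q; rewrite inE addn0 modn_small // inord_val. Qed.

Lemma run_a1 (s : state) (k : nat) : (run s (nseq k La)).1 = rotS k s.1.
Proof.
elim: k s => [|k IH] s; first by rewrite rotS0.
rewrite rc_run_cons IH -[k.+1]addn1 -rotS_comp; congr rotS.
by apply/setP => q; rewrite rc_step1 inE /trA /= /Defs.rot addn1.
Qed.

Lemma run_a2 (s : state) (k : nat) (u : 'I_n) : (u \in s.2 -> u \in (run s (nseq k La)).2) /\
   (u \in (run s (nseq k La)).2 -> (u == ord0) || (u \in s.2)).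
Proof.
elim: k s => [|k IH] s; first by split => // ->; rewrite orbT.
rewrite rc_run_cons; have [H1 H2] := IH (step s La).
rewrite /= img_a in H1 H2; case: ifP => _ in H1 H2.
  split => [uT|/H2]; first by apply: H1; rewrite in_setU1 uT orbT.
  by rewrite in_setU1 orbA orbb.
by split.
Qed.

Lemma run_a (s : state) (k i : nat) : 0 < i <= k -> ord0 \in rotS i s.1 ->
  run s (nseq k La) = (rotS k s.1, ord0 |: s.2).
Proof.
move=> /andP [i0 ik] H; rewrite [LHS]surjective_pairing run_a1; congr pair.
have E : nseq k La = nseq i La ++ nseq (k - i) La by rewrite -nseqD subnKC.
have H0 : ord0 \in (run s (nseq i La)).2.
  rewrite -(prednK i0) nseqSr rc_run_rcons; apply: rc_step_valid.
  by rewrite -rc_run_rcons -nseqSr prednK // run_a1.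
apply/setP => u; rewrite in_setU1 E rc_run_cat; apply/idP/idP => H1.
  have [_ Hb] := run_a2 (run s (nseq i La)) (k - i) u.
  have [_ Ha] := run_a2 s i u.
  by case/orP: (Hb H1) => [->//|/Ha].
have [Hb _] := run_a2 (run s (nseq i La)) (k - i) u.
have [Ha _] := run_a2 s i u.
by apply: Hb; case/orP: H1 => [/eqP ->|/Ha].
Qed.

(* The word a^p b d^n detects whether p is in S: a^p moves p to 0, b keeps 0
   while clearing n-1 from T, and d^n then accepts iff 0 was in S. *)
Lemma acc_S s (p : 'I_m) : acc (run s (nseq p La ++ Lb :: nseq n Ld)) = (p \in s.1).
Proof.
set s1 := run s (nseq p La); set s2 := step s1 Lb.
have -> : run s (nseq p La ++ Lb :: nseq n Ld) = run s2 (nseq n Ld) by rewrite rc_run_cat.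
have S2 : (ord0 \in s2.1) = (p \in s.1).
  rewrite rc_step1; have -> : trA Lb ord0 = ord0 by apply: val_inj; rewrite /= trA_b.
  by rewrite /s1 run_a1 inE add0n modn_small // inord_val.
have M2 : ord_max \notin s2.2 by rewrite rc_step2 in_img_b /= eqxx.
have [_ H] := @run_d s2 n (leqnn _).
apply/idP/idP => [/H [[t0 T0 [E|E]]|[S0 _]]|pS].
- by have := ltn_ord t0; move: E => /=; lia.
- have tm : t0 = ord_max by apply: val_inj => /=; move: E => /=; lia.
  by rewrite -tm T0 in M2.
- by rewrite -S2.
by apply/H; right; split; [rewrite S2 | rewrite /=].
Qed.

(* Distinct states differ in S, detected by a^p b d^n, or in T, detected
   by a power of d. *)
Lemma distinguish (s s' : state) : s <> s' ->
  exists z, acc (run s z) <> acc (run s' z).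
Proof.
case: s s' => [S T] [S' T'] ne.
case: (eqVneq T T') => [ET|NT].
  have NS : S != S' by apply/eqP => ES; apply: ne; rewrite ES ET.
  have [p Hp] : exists p, (p \in S) != (p \in S').
    apply/existsP; apply: contraNT NS => /existsPn H.
    by apply/eqP/setP => p; apply/eqP/negPn; exact: H.
  by exists (nseq p La ++ Lb :: nseq n Ld); rewrite !acc_S; apply/eqP.
have [t Ht] : exists t, (t \in T) != (t \in T').
  apply/existsP; apply: contraNT NT => /existsPn H.
  by apply/eqP/setP => p; apply/eqP/negPn; exact: H.
by exists (nseq (n'.+2 - t) Ld); rewrite !acc_d; apply/eqP.
Qed.

Definition reach (s : state) := exists w, run init w = s.

Lemma reach_run s z : reach s -> reach (run s z).
Proof. by case=> w <-; exists (w ++ z); rewrite rc_run_cat. Qed.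

Lemma reach_step s x : reach s -> reach (step s x).
Proof. by move/(reach_run [:: x]). Qed.

Lemma step_T_empty (S0 : {set 'I_m}) x S :
  [set q | trA x q \in S0] = S -> ord0 \notin S -> step (S0, set0) x = (S, set0).
Proof. by move=> ES; apply: rc_step_set0. Qed.

Local Notation top_with P := [set q : 'I_m | (nat_of_ord q == m'.+2) || P q].

(* Sets {m-1} u P with P inside [m-2-j, m-2] are reachable with T empty:
   one letter a shifts P down by one, and then c or b puts m-2 into S or
   not while keeping m-1. *)
Lemma reach_top_with j : j <= m'.+1 -> forall P : nat -> bool,
  (forall k, P k -> m'.+2 - j <= k <= m'.+1) -> reach (top_with P, set0).
Proof.
elim: j => [_|j IH lej] P HP.
  have -> : top_with P = [set ord_max].
    apply/setP => q; rewrite !inE -val_eqE /=.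
    by case Pq: (P q); rewrite ?orbF ?orbT //; have := HP _ Pq; lia.
  by exists [::].
pose P0 k := (m'.+2 - j <= k <= m'.+1) && P k.-1.
have R0 : reach (top_with P0, set0) by apply: (IH (ltnW lej)) => k /andP [].
pose S1 := [set q : 'I_m | (nat_of_ord q == m'.+1) || (m'.+1 - j <= q <= m') && P q].
have R1 : reach (S1, set0).
  rewrite -(@step_T_empty (top_with P0) La S1) //; first exact: reach_step.
    apply/setP => q; rewrite !inE trA_a /P0.
    by have := ltn_ord q; case: ifP => /= /eqP H; lia.
  by rewrite inE /=; lia.
have notin0 : ord0 \notin top_with P by rewrite inE /=; apply/negP => /HP; lia.
case Pm: (P m'.+1).
  rewrite -(@step_T_empty S1 Lc (top_with P)) //; first exact: reach_step.
  apply/setP => q; rewrite !inE trA_c.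
  have := ltn_ord q; case: ifP => /eqP H; first by rewrite eqxx H.
  case: (eqVneq (nat_of_ord q) m'.+1) => [->|H']; first by rewrite Pm orbT.
  case Pq: (P q); have := HP q; rewrite Pq; lia.
rewrite -(@step_T_empty S1 Lb (top_with P)) //; first exact: reach_step.
apply/setP => q; rewrite !inE trA_b.
have := ltn_ord q; case: ifP => /eqP H; first by rewrite H Pm /=; lia.
case: ifP => /eqP H'; first by rewrite eqxx H'.
case Pq: (P q); have := HP q; rewrite Pq; lia.
Qed.

(* Every S avoiding 0 is reachable with T empty: according to whether m-1,
   or else m-2, or neither is in S, the set is of the form above or is
   obtained from one by b or c. *)
Lemma reach_T_empty (S : {set 'I_m}) : ord0 \notin S -> reach (S, set0).
Proof.
move=> S0.
pose P (b : nat) k := (0 < k <= b) && (inord k \in S).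
have RP b : b <= m'.+1 -> reach (top_with (P b), set0).
  by move=> hb; apply: (reach_top_with (leqnn _)) => k /andP [H _]; lia.
have inner_val (q : 'I_m) : q != ord_max -> q != ord0 ->
   (nat_of_ord q != m'.+2) && (nat_of_ord q != 0).
  by rewrite -!val_eqE /= => -> ->.
case Sm: (ord_max \in S).
  have <- : top_with (P m'.+1) = S; last exact: RP.
  apply/setP => q; rewrite inE /P inord_val.
  case: (eqVneq q ord_max) => [->|nm]; first by rewrite /= eqxx Sm.
  case: (eqVneq q ord0) => [->|n0]; first by rewrite /= (negbTE S0).
  move/andP: (inner_val q nm n0) => [/eqP h1 /eqP h2].
  by have := ltn_ord q; case: (q \in S); lia.
case Sm1: (inord m'.+1 \in S).
  rewrite -(@step_T_empty (top_with (P m')) Lb S) //.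
    by apply: reach_step; apply: RP.
  apply/setP => q; rewrite !inE /P trA_b.
  case: ifP => /eqP H1.
    have -> : q = inord m'.+1 by apply: val_inj => /=; rewrite inordK.
    by rewrite Sm1 eqxx.
  case: ifP => /eqP H2.
    have -> : q = ord_max by apply: val_inj.
    by rewrite Sm /=; lia.
  rewrite inord_val.
  case: (eqVneq q ord0) => [->|n0]; first by rewrite /= (negbTE S0).
  by move: n0; rewrite -val_eqE /=; have := ltn_ord q; case: (q \in S); lia.
rewrite -(@step_T_empty (top_with (P m'.+1)) Lc S) //.
  by apply: reach_step; apply: RP.
apply/setP => q; rewrite !inE /P trA_c.
case: ifP => /eqP H1.
  have -> : q = ord_max by apply: val_inj.
  by rewrite Sm Sm1 /=; lia.
rewrite inord_val.
case: (eqVneq q ord0) => [->|n0]; first by rewrite /= (negbTE S0).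
by move: n0; rewrite -val_eqE /=; have := ltn_ord q; case: (q \in S); lia.
Qed.

Lemma step_d (S : {set 'I_m}) T : ord0 \notin S -> step (S, T) Ld = (S, trB Ld @: T).
Proof.
move=> S0; rewrite /rc_step /=.
have -> : [set q | trA Ld q \in S] = S by apply/setP => q; rewrite inE trA_d.
by rewrite (negbTE S0).
Qed.

(* Every nonempty S avoiding 0 is reachable with any T, by induction on a
   bound on T: T minus 0 is the d-rotation of a set with a smaller bound,
   and 0 is added to T by a^m, which leaves S unchanged. *)
Lemma reach_S_nonempty (S : {set 'I_m}) (T : {set 'I_n}) :
  ord0 \notin S -> S != set0 -> reach (S, T).
Proof.
move=> S0 /set0Pn [p pS].
have p0 : 0 < nat_of_ord p.
  by rewrite lt0n; apply: contraNneq S0 => H; rewrite (_ : ord0 = p) //; apply: val_inj.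
suff H k : k <= n -> forall T : {set 'I_n},
    (forall t, t \in T -> nat_of_ord t < k) -> reach (S, T).
  by apply: (H n (leqnn _)) => t _; apply: ltn_ord.
elim: k => [_|k IH lek] {}T HT.
  have -> : T = set0 by apply/setP => t; rewrite inE; apply/negP => /HT.
  exact: reach_T_empty.
pose T0 := [set t : 'I_n | ((nat_of_ord t).+1 < n) && (inord (nat_of_ord t).+1 \in T)].
have R0 : reach (S, T0).
  apply: (IH (ltnW lek)) => t; rewrite inE => /andP [lt /HT].
  by rewrite inordK.
have E0 : trB Ld @: T0 = T :\ ord0.
  apply/setP => u; rewrite in_img_d !inE -val_eqE /= val_predB.
  have := ltn_ord u; case: (eqVneq (nat_of_ord u) 0) => [->|un0] /= hu.
    by rewrite ltnn.
  by rewrite prednK ?lt0n // hu /= -(inord_val u) // inord_val.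
have R1 : reach (S, T :\ ord0) by rewrite -E0 -step_d //; apply: reach_step.
case T0in: (ord0 \in T); last first.
  suff -> : T = T :\ ord0 by [].
  apply/setP => u; rewrite !inE; case: (eqVneq u ord0) => [->|//].
  by rewrite T0in.
have -> : (S, T) = run (S, T :\ ord0) (nseq m La).
  rewrite (@run_a _ m p) /=; first by rewrite rotS_m setD1K.
  - by rewrite p0 /= ltnW.
  - by rewrite inE add0n modn_small // inord_val.
exact: reach_run.
Qed.

(* An empty S is reached from {m-1} by c, since no state is mapped to m-1
   by c, which is an involution on the states of V_n(d,c,b,a). *)
Lemma reach_S_empty (T : {set 'I_n}) : reach (set0, T).
Proof.
have -> : (set0, T) = step ([set ord_max], trB Lc @: T) Lc.
  rewrite /rc_step /=.
  have -> : [set q | trA Lc q \in [set ord_max]] = set0 :> {set 'I_m}.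
    apply/setP => q; rewrite !inE -val_eqE /= trA_c.
    by have := ltn_ord q; case: ifP => /eqP; lia.
  by rewrite inE img_cc.
apply/reach_step/reach_S_nonempty; first by rewrite inE -val_eqE.
by apply/set0Pn; exists ord_max; rewrite inE.
Qed.

(* A proper S containing 0 (with 0 in T) is obtained by rotating with
   a^(m-q0), q0 \notin S, a set avoiding 0. *)
Lemma reach_S_proper (S : {set 'I_m}) (T : {set 'I_n}) (q0 : 'I_m) :
  ord0 \in S -> ord0 \in T -> q0 \notin S -> reach (S, T).
Proof.
move=> S0 T0 q0S.
have q0p : 0 < nat_of_ord q0.
  by rewrite lt0n; apply: contraNneq q0S => H; rewrite (_ : q0 = ord0) //; apply: val_inj.
have R : reach (rotS q0 S, T).
  apply: reach_S_nonempty.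
    by rewrite inE add0n modn_small // inord_val.
  apply/set0Pn; exists (inord (m - q0)); rewrite inE inordK; last by lia.
  rewrite subnK ?modnn; last by apply: ltnW.
  by have -> : inord 0 = ord0 :> 'I_m by apply: val_inj => /=; rewrite inordK.
have rotK : rotS (m - q0) (rotS q0 S) = S.
  by rewrite rotS_comp subnK ?rotS_m //; apply: ltnW.
have -> : (S, T) = run (rotS q0 S, T) (nseq (m - q0) La).
  rewrite (@run_a _ _ (m - q0)) /=; last by rewrite rotK.
    by rewrite rotK (setUidPr _) ?sub1set.
  by rewrite leqnn andbT subn_gt0.
exact: reach_run.
Qed.

(* The full S (with 0 in T) is reached from the complement of {m-1} by c. *)
Lemma reach_S_full (T : {set 'I_n}) : ord0 \in T -> reach (setT, T).
Proof.
move=> T0.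
have R : reach ([set~ ord_max], trB Lc @: T).
  apply: (@reach_S_proper _ _ ord_max).
  - by rewrite !inE -val_eqE.
  - rewrite in_img_c; suff -> : trB Lc ord0 = ord0 by [].
    by apply: val_inj => /=; rewrite trB_c.
  - by rewrite !inE eqxx.
have -> : (setT, T) = step ([set~ ord_max], trB Lc @: T) Lc.
  rewrite /rc_step /=.
  have -> : [set q | trA Lc q \in [set~ ord_max]] = setT :> {set 'I_m}.
    apply/setP => q; rewrite !inE -val_eqE /= trA_c.
    by have := ltn_ord q; case: ifP => /eqP; lia.
  by rewrite inE img_cc (setUidPr _) ?sub1set.
exact: reach_step.
Qed.

Lemma reach_valid s : valid s -> reach s.
Proof.
case: s => S T; rewrite /rc_valid /=.
case S0: (ord0 \in S) => /= H.
  case: (eqVneq S setT) => [->|NS]; first exact: reach_S_full.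
  have [q0 Hq] : exists q0, q0 \notin S.
    apply/existsP; apply: contraNT NS => /existsPn HH.
    by apply/eqP/setP => q; rewrite inE; move: (HH q); rewrite negbK.
  exact: (reach_S_proper S0 H Hq).
case: (eqVneq S set0) => [->|NS]; first exact: reach_S_empty.
by apply: reach_S_nonempty; rewrite ?S0.
Qed.


(* Counting: 2^(m-1) 2^n valid states have 0 \notin S, and 2^(m-1) 2^(n-1)
   have 0 in both S and T, which sums to 3 2^(m+n-2). *)
Lemma card_set (T : finType) : #|{set T}| = 2 ^ #|T|.
Proof. by rewrite -[LHS]cardsT -powersetT card_powerset cardsT. Qed.

Lemma card_powerset_setC1 k : #|powerset [set~ (ord0 : 'I_k.+1)]| = 2 ^ k.
Proof. by rewrite card_powerset cardsC1 card_ord. Qed.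

Lemma card_valid : #|[pred s : state | valid s]| = 3 * 2 ^ (m + n - 2).
Proof.
pose A := powerset [set~ (ord0 : 'I_m)].
pose B := powerset [set~ (ord0 : 'I_n)].
have subC1 (T : finType) (a : T) (S : {set T}) : (S \subset [set~ a]) = (a \notin S).
  apply/subsetP/idP => [H|H x xS]; first by apply/negP => /H; rewrite !inE eqxx.
  by rewrite !inE; apply: contraNneq H => <-.
have -> : #|[pred s : state | valid s]| = #|setX A setT :|: setX (~: A) (~: B)|.
  apply: eq_card => [[S T]]; rewrite !inE /rc_valid /A /B /= !subC1 !negbK andbT.
  by case: (ord0 \in S); case: (ord0 \in T).
rewrite cardsU.
have -> : setX A setT :&: setX (~: A) (~: B) = set0.
  by apply/setP => [[S T]]; rewrite !inE /=; case: (S \subset _).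
rewrite cards0 subn0 !cardsX.
have cardC (T : finType) (E : {set {set T}}) : #|~: E| = 2 ^ #|T| - #|E|.
  by rewrite -card_set -(cardsC E) addKn.
rewrite !cardC cardsT !card_set !card_ord /A /B !card_powerset_setC1.
have -> : m + n - 2 = (m' + n').+4 by lia.
rewrite !expnS expnD.
set a := 2 ^ m'; set b := 2 ^ n'.
nia.
Qed.

Local Notation vstate := {s : state | valid s}.

Definition vstep (q : vstate) (x : letter) : vstate :=
  exist _ (step (val q) x) (rc_valid_step trA ord0 trB ord0 (val q) x).

Lemma valid_init : valid init.
Proof. by rewrite /rc_valid /= inE -val_eqE. Qed.

Definition vinit : vstate := exist _ init valid_init.

Lemma val_vrun w (q : vstate) : val (foldl vstep q w) = run (val q) w.
Proof. by elim: w q => [|x w IH] q //=; rewrite IH. Qed.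

Theorem V_state_complexity :
  state_complexity (lang_cat (lang_rev (V_abcd m)) (V_dcba n)) (3 * 2 ^ (m + n - 2)).
Proof.
rewrite -card_valid -card_sig.
apply: (@state_complexity_minimal_dfa _ _ vstep vinit (fun q => acc (val q))).
- by move=> w; rewrite val_vrun; apply: V_correct.
- move=> q; have [w Ew] := reach_valid (valP q).
  by exists w; apply: val_inj; rewrite val_vrun.
- move=> p q pq; have [|z Hz] := @distinguish (val p) (val q).
    by move/val_inj.
  by exists z; rewrite !val_vrun.
Qed.

End Witnesses.

Theorem theorem5 (m n : nat) (hm : 3 <= m) (hn : 3 <= n) :
  state_complexity (lang_cat (lang_rev (V_abcd m)) (V_dcba n))
                   (3 * 2 ^ (m + n - 2)).
Proof.
case: m hm => [|[|[|m']]] // _; case: n hn => [|[|[|n']]] // _.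
exact: V_state_complexity.
Qed.
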